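(* Let $(S,E,f)$ be a reduced and closed observation table for $U$ and $D$ as defined below, let $\alpha\in S\cdot E$, and let $w\in\Sigma^*$ be a prefix of $\alpha$ with $\alpha=w\alpha'$. Let $r=\delta_f^*(\epsilon,w)$. Then $\alpha\in U$ if and only if $r\alpha'\in U$.
   Context: $\Sigma$ is a finite alphabet, $U\subseteq\Sigma^\omega$ an $\omega$-language recognizable by a weak deterministic Büchi automaton, and $D\subseteq\Sigma^\omega$ a regular set with trivial right-congruence (for all $w\in\Sigma^*,\alpha$: $\alpha\in D\iff w\alpha\in D$). An observation table $(S,E,f)$ consists of a prefix-closed finite $S\subseteq\Sigma^*$, a suffix-closed finite set $E$ of ultimately periodic words with $E\cap D=\emptyset$, and $f:(S\cup S\Sigma)\times E\to\{\text{yes},\text{no}\}$ with $f(s,\alpha)=\text{yes}$ iff $s\alpha\in U$. For $s\in S\cup S\Sigma$ let $f_s(\alpha)=f(s,\alpha)$. The table is reduced if $f_s\neq f_t$ for distinct $s,t\in S$, and closed if for every $s\in S\Sigma$ there is $t\in S$ with $f_s=f_t$. For a reduced closed table, $\mathcal{T}_{S,f}=(\Sigma,S,\delta_f,\epsilon)$ with $\delta_f(s,\sigma)$ the unique $t\in S$ with $f_{s\sigma}=f_t$, and $\delta_f^*$ the extension of $\delta_f$ to finite words. *)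

From Stdlib Require Import List.
From mathcomp Require Import all_boot.
Set Implicit Arguments. Unset Strict Implicit. Unset Printing Implicit Defensive.

Section Defs.
Variable Sigma : finType.

Definition oword := nat -> Sigma.

Definition ocat (w : seq Sigma) (a : oword) : oword :=
  fun n => if n < size w then nth (a 0) w n else a (n - size w).

(* v^omega for nonempty v *)
Definition oomega (v : seq Sigma) (x0 : Sigma) : oword :=
  fun n => nth x0 v (n %% size v).

Definition ultimately_periodic (a : oword) : Prop :=
  exists (u v : seq Sigma) (x0 : Sigma), 0 < size v /\
    forall n, a n = ocat u (oomega v x0) n.

Definition inf_often (Q : Type) (F : Q -> bool) (r : nat -> Q) : Prop :=
  forall N, exists n, N <= n /\ F (r n).

Fixpoint drun (Q : Type) (d : Q -> Sigma -> Q) (q0 : Q) (a : oword) (n : nat) : Q :=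
  match n with
  | 0 => q0
  | n'.+1 => d (drun d q0 a n') (a n')
  end.

Definition dba_accepts (Q : Type) (d : Q -> Sigma -> Q) (q0 : Q) (F : Q -> bool)
  (a : oword) : Prop := inf_often F (drun d q0 a).

(* weak: every strongly connected component is entirely accepting or
   entirely rejecting *)
Definition dba_weak (Q : finType) (d : Q -> Sigma -> Q) (F : pred Q) : Prop :=
  let e := [rel q q' | [exists s : Sigma, d q s == q']] in
  forall q q', connect e q q' -> connect e q' q -> F q = F q'.

Definition wdba_recognizable (U : oword -> Prop) : Prop :=
  exists (Q : finType) (q0 : Q) (d : Q -> Sigma -> Q) (F : pred Q),
    dba_weak d F /\ forall a, U a <-> dba_accepts d q0 F a.

Definition nba_accepts (Q : finType) (I : pred Q) (d : Q -> Sigma -> Q -> bool)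
  (F : pred Q) (a : oword) : Prop :=
  exists r : nat -> Q, I (r 0) /\ (forall n, d (r n) (a n) (r n.+1)) /\ inf_often F r.

Definition omega_regular (L : oword -> Prop) : Prop :=
  exists (Q : finType) (I : pred Q) (d : Q -> Sigma -> Q -> bool) (F : pred Q),
    forall a, L a <-> nba_accepts I d F a.

Definition trivial_right_congruence (L : oword -> Prop) : Prop :=
  forall (w : seq Sigma) (a : oword), L a <-> L (ocat w a).

Definition prefix_closed (S : seq (seq Sigma)) : Prop :=
  forall s, s \in S -> forall n, take n s \in S.

Definition suffix_closed (E : seq oword) : Prop :=
  forall e, List.In e E -> forall n, exists e', List.In e' E /\ forall m, e' m = e (n + m).

Definition in_SSigma (S : seq (seq Sigma)) (s : seq Sigma) : Prop :=
  s \in S \/ exists t, exists c : Sigma, t \in S /\ s = rcons t c.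

Definition row_eq (E : seq oword) (f : seq Sigma -> oword -> bool) (s t : seq Sigma) : bool :=
  all (fun e => f s e == f t e) E.

Definition observation_table (U D : oword -> Prop) (S : seq (seq Sigma)) (E : seq oword)
  (f : seq Sigma -> oword -> bool) : Prop :=
  [/\ prefix_closed S, suffix_closed E,
      (forall e, List.In e E -> ultimately_periodic e),
      (forall e, List.In e E -> ~ D e) &
      (forall s e, in_SSigma S s -> List.In e E -> (f s e <-> U (ocat s e)))].

Definition table_reduced (S : seq (seq Sigma)) (E : seq oword) (f : seq Sigma -> oword -> bool) : Prop :=
  forall s t, s \in S -> t \in S -> s != t -> ~~ row_eq E f s t.

Definition table_closed (S : seq (seq Sigma)) (E : seq oword) (f : seq Sigma -> oword -> bool) : Prop :=
  forall s (c : Sigma), s \in S -> exists2 t, t \in S & row_eq E f (rcons s c) t.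

(* delta_f(s, c) = the t in S with f_{sc} = f_t (unique when the table is
   reduced and closed; we pick the first such t in the list S). *)
Definition delta_f (S : seq (seq Sigma)) (E : seq oword) (f : seq Sigma -> oword -> bool)
  (s : seq Sigma) (c : Sigma) : seq Sigma :=
  nth [::] S (find (fun t => row_eq E f (rcons s c) t) S).

Definition delta_f_star (S : seq (seq Sigma)) (E : seq oword) (f : seq Sigma -> oword -> bool)
  (q : seq Sigma) (w : seq Sigma) : seq Sigma :=
  foldl (delta_f S E f) q w.

End Defs.

(** Both [alpha = s e] and [alpha = w alpha'] factor the same word.  If [w] is
    a prefix of [s] then [w] lies in the prefix-closed set [S] and, the table
    being reduced, [delta_f_star] maps [w] to itself.  Otherwise [w = s v] with
    [e = v alpha'], so every suffix of [v alpha'] is (pointwise) a column of the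
    suffix-closed [E]; reading [v] letter by letter, each transition replaces
    [q c] by the row [delta_f q c] that agrees with it on all columns, which by
    the table property does not change membership in [U]. *)
From Stdlib Require Import List.
From mathcomp Require Import all_boot zify.

Set Implicit Arguments.
Unset Strict Implicit.
Unset Printing Implicit Defensive.

Section OmegaWords.
Variable Sigma : finType.
Implicit Types (s w v : seq Sigma) (a b : oword Sigma).

Lemma eq_ocat s a b : a =1 b -> ocat s a =1 ocat s b.
Proof.
move=> eq_ab n; rewrite /ocat; case: ifP => [lt_ns | _]; last exact: eq_ab.
exact: set_nth_default.
Qed.

Lemma ocat_cat s w a : ocat (s ++ w) a =1 ocat s (ocat w a).
Proof.
move=> n; rewrite /ocat size_cat nth_cat.
case: (ltnP n (size s)) => lt_ns.
  by rewrite ifT; [apply: set_nth_default | lia].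
case: ifP => lt_nsw; first by rewrite ifT //; lia.
by rewrite ifF ?subnDA //; lia.
Qed.

Lemma ocat_addn s a m : ocat s a (size s + m) = a m.
Proof. by rewrite /ocat ifF; [congr a; lia | lia]. Qed.

Lemma ocat_cancel s a b : ocat s a =1 ocat s b -> a =1 b.
Proof. by move=> eq_sab m; rewrite -(ocat_addn s a) -(ocat_addn s b). Qed.

Lemma ocat_eq_take s w a b :
  ocat s a =1 ocat w b -> size w <= size s -> w = take (size w) s.
Proof.
move=> eq_sw le_ws; apply: (@eq_from_nth _ (b 0)); first by rewrite size_takel.
move=> i lt_iw; rewrite nth_take //.
have := eq_sw i; rewrite /ocat ifT ?ifT //; last by lia.
by move=> <-; apply: set_nth_default; lia.
Qed.

Lemma wdba_recognizable_ext (U : oword Sigma -> Prop) :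
  wdba_recognizable U -> forall a b, a =1 b -> U a <-> U b.
Proof.
case=> Q [q0 [d [F [_ U_acc]]]].
suff acc_ext a b : a =1 b -> dba_accepts d q0 F a -> dba_accepts d q0 F b.
  by move=> a b eq_ab; rewrite !U_acc; split; apply: acc_ext => // n; rewrite eq_ab.
move=> eq_ab acc N; have [n [le_Nn Fn]] := acc N; exists n; split=> //.
suff -> : drun d q0 b n = drun d q0 a n by [].
by elim: n {le_Nn Fn} => //= n ->; rewrite eq_ab.
Qed.

End OmegaWords.

Lemma all_In (T : Type) (p : pred T) (l : seq T) x : all p l -> List.In x l -> p x.
Proof. by elim: l => //= y l IH /andP[py pl] [<- | /IH]; last exact. Qed.

Section ObservationTable.
Variable Sigma : finType.
Variables (S : seq (seq Sigma)) (E : seq (oword Sigma)) (f : seq Sigma -> oword Sigma -> bool).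

Definition in_columns (b : oword Sigma) : Prop := exists2 e, List.In e E & e =1 b.

Lemma in_columns_behead (c : Sigma) v a :
  suffix_closed E -> in_columns (ocat (c :: v) a) -> in_columns (ocat v a).
Proof.
move=> sufE [e eE eq_e]; have [e' [e'E eq_e']] := sufE e eE 1.
exists e' => // m; rewrite eq_e' eq_e -cat1s ocat_cat.
exact: (ocat_addn [:: c]).
Qed.

Lemma row_eq_refl s : row_eq E f s s.
Proof. by rewrite /row_eq; elim: E => //= e E' ->; rewrite eqxx. Qed.

Lemma row_eq_In s t e : row_eq E f s t -> List.In e E -> f s e = f t e.
Proof. by move=> row_st eE; apply/eqP; exact: all_In row_st eE. Qed.

Lemma delta_fP q c :
  (exists2 t, t \in S & row_eq E f (rcons q c) t) ->
  delta_f S E f q c \in S /\ row_eq E f (rcons q c) (delta_f S E f q c).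
Proof.
case=> t tS row_t; have has_row : has (row_eq E f (rcons q c)) S by apply/hasP; exists t.
by split; [rewrite /delta_f mem_nth // -has_find | exact: nth_find].
Qed.

Lemma delta_f_rcons q c :
  table_reduced S E f -> rcons q c \in S -> delta_f S E f q c = rcons q c.
Proof.
move=> red qcS; have [|tS row_t] := @delta_fP q c.
  by exists (rcons q c); last exact: row_eq_refl.
by apply: contraTeq row_t; rewrite eq_sym; exact: red.
Qed.

Lemma delta_f_star_id s :
  prefix_closed S -> table_reduced S E f -> s \in S -> delta_f_star S E f [::] s = s.
Proof.
move=> pre red; elim/last_ind: s => // s c IH scS.
have sS : s \in S by have := pre _ scS (size s); rewrite -cats1 take_size_cat.
by rewrite /delta_f_star foldl_rcons -/(delta_f_star S E f [::] s) IH // delta_f_rcons.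
Qed.

Variables (U D : oword Sigma -> Prop).
Hypotheses (HU : wdba_recognizable U) (Htab : observation_table U D S E f).

Lemma table_step q c b :
  table_closed S E f -> q \in S -> in_columns b ->
  U (ocat (rcons q c) b) <-> U (ocat (delta_f S E f q c) b).
Proof.
move=> clo qS [e eE eq_e]; have [_ _ _ _ Uf] := Htab.
have [tS row_t] := delta_fP (clo q c qS).
rewrite -!(wdba_recognizable_ext HU (eq_ocat _ eq_e)).
rewrite -(Uf _ _ _ eE); last by right; exists q, c.
rewrite -(Uf _ _ _ eE); last by left.
by rewrite (row_eq_In row_t eE).
Qed.

Lemma table_run v q a :
  table_closed S E f -> q \in S -> in_columns (ocat v a) ->
  U (ocat (q ++ v) a) <-> U (ocat (delta_f_star S E f q v) a).
Proof.
have [_ sufE _ _ _] := Htab; have U_ext := wdba_recognizable_ext HU.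
move=> clo; elim: v q => [|c v IH] q qS col_v; first by rewrite cats0.
have [tS _] := delta_fP (clo q c qS).
have col_v' := in_columns_behead sufE col_v.
rewrite -(IH _ tS col_v') -cat1s catA cats1.
rewrite !(U_ext _ _ (ocat_cat _ _ _)).
exact: table_step.
Qed.

End ObservationTable.

Theorem lemma6 (Sigma : finType) (U D : oword Sigma -> Prop)
  (HU : wdba_recognizable U) (HDreg : omega_regular D)
  (HDtriv : trivial_right_congruence D)
  (S : seq (seq Sigma)) (E : seq (oword Sigma)) (f : seq Sigma -> oword Sigma -> bool)
  (Htab : observation_table U D S E f)
  (Hred : table_reduced S E f) (Hclo : table_closed S E f)
  (alpha : oword Sigma)
  (HSE : exists s e, s \in S /\ List.In e E /\ forall n, alpha n = ocat s e n)
  (w : seq Sigma) (alpha' : oword Sigma)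
  (Hw : forall n, alpha n = ocat w alpha' n) :
  U alpha <-> U (ocat (delta_f_star S E f [::] w) alpha').
Proof.
have [pre _ _ _ _] := Htab.
have [s [e [sS [eE eq_alpha]]]] := HSE.
have eq_se : ocat s e =1 ocat w alpha' by move=> n; rewrite -eq_alpha Hw.
rewrite (wdba_recognizable_ext HU Hw).
case: (leqP (size w) (size s)) => [le_ws | lt_sw].
  have wS : w \in S by rewrite (ocat_eq_take eq_se le_ws); exact: (pre s sS (size w)).
  by rewrite delta_f_star_id.
set v := drop (size s) w.
have w_sv : w = s ++ v.
  by rewrite -{1}(cat_take_drop (size s) w) -(ocat_eq_take (fsym eq_se)) // ltnW.
have col_v : in_columns E (ocat v alpha').
  by exists e => //; apply: (@ocat_cancel _ s) => n; rewrite eq_se w_sv ocat_cat.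
rewrite w_sv /delta_f_star foldl_cat -/(delta_f_star S E f [::] s).
by rewrite delta_f_star_id //; exact: (table_run HU Htab Hclo sS col_v).
Qed.
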